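(* There is a c.e. set $A\subseteq\omega$ such that the density of $A$ exists, yet for every $\Pi^0_1$ subset $B$ of $A$ we have $\underline{\rho}(A\setminus B)>0$, and hence $d(A,B)>0$.
   Context: For $S\subseteq\omega$ and $n>0$, $\rho_n(S)=|S\cap[0,n)|/n$; $\underline{\rho}(S)=\liminf_n\rho_n(S)$, and the density is $\lim_n\rho_n(S)$ when it exists. For $A,B\subseteq\omega$, $d(A,B)=\underline{\rho}(A\triangle B)$. *)

From Stdlib Require Import Reals List Arith.
From Coquelicot Require Import Coquelicot.
Import ListNotations.
Local Open Scope nat_scope.

Definition natset := nat -> bool.

Inductive PR : Type :=
  | PRzero : PR
  | PRsucc : PR
  | PRproj : nat -> PR             (* i-th argument (0 if absent) *)
  | PRcomp : PR -> list PR -> PR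
  | PRrec  : PR -> PR -> PR.       (* primitive recursion on the first arg *)

Fixpoint pr_eval (p : PR) (xs : list nat) {struct p} : nat :=
  match p with
  | PRzero => 0
  | PRsucc => S (hd 0 xs)
  | PRproj i => nth i xs 0
  | PRcomp f gs =>
      pr_eval f ((fix ev (l : list PR) : list nat :=
                    match l with
                    | [] => []
                    | g :: l' => pr_eval g xs :: ev l'
                    end) gs)
  | PRrec f g =>
      let ys := tl xs in
      (fix h (n : nat) : nat :=
         match n with
         | O => pr_eval f ys
         | S m => pr_eval g (m :: h m :: ys)
         end) (hd 0 xs)
  end.

(* Sigma^0_1 (= computably enumerable) and Pi^0_1 subsets of omega,
   via primitive recursive matrices (Kleene normal form). *)
Definition ce (A : natset) : Prop :=
  exists p : PR, forall n, A n = true <-> exists m, pr_eval p [n; m] <> 0%nat.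

Definition Pi01 (B : natset) : Prop :=
  exists p : PR, forall n, B n = true <-> forall m, pr_eval p [n; m] <> 0%nat.

Open Scope R_scope.
Fixpoint count_below (X : natset) (n : nat) : nat :=
  match n with
  | O => O
  | Datatypes.S k => (count_below X k + (if X k then 1 else 0))%nat
  end.

Definition rho (S : natset) (n : nat) : R := INR (count_below S n) / INR n.

(* the sequence (rho_n(S))_{n >= 1}, reindexed from 0 *)
Definition rho_seq (S : natset) : nat -> R := fun k => rho S (Datatypes.S k).

Definition lower_density (S : natset) : Rbar := LimInf_seq (rho_seq S).

Definition has_density (S : natset) : Prop := ex_finite_lim_seq (rho_seq S).

Definition setminus (A B : natset) : natset := fun n => andb (A n) (negb (B n)).
Definition symdiff (A B : natset) : natset := fun n => xorb (A n) (B n).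
Definition subset (B A : natset) : Prop := forall n, B n = true -> A n = true.

Definition dens_dist (A B : natset) : Rbar := lower_density (symdiff A B).

From Stdlib Require Import Reals.
From Coquelicot Require Import Coquelicot.
From Stdlib Require Import Lra Lia Arith List Bool Classical ClassicalEpsilon.
Import ListNotations.

(* Cut omega into the columns [C_e = {2^(e+1) (2k+1) - 1 | k}], and let [B_e] be the
   [Pi^0_1] set given by the program with code [e]. The set [A] meets [C_e] in the longest
   initial segment of [C_e] avoiding [B_e]. Avoiding [B_e] is a [Sigma^0_1] condition, because
   the graph of primitive recursive evaluation is decided by a primitive recursive check of
   computation traces; so [A] is c.e. If [B_e] is below [A], the least point of [B_e] in
   [C_e] could not lie in [A], so all of [C_e], of density [2^-(e+2)], lies in [A \ B_e].
   Finally [A] has a density: on each column [C_e] with [e < N] it is either the whole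
   column or finite, and the columns [e >= N] together have density [2^-N]. *)

Local Open Scope nat_scope.

(** * Primitive recursive definability *)

Fixpoint recursor (b : nat) (s : nat -> nat -> nat) (n : nat) : nat :=
  match n with O => b | S m => s m (recursor b s m) end.

Lemma recursor_ext b s1 s2 n :
  (forall m a, s1 m a = s2 m a) -> recursor b s1 n = recursor b s2 n.
Proof. intros H; induction n; simpl; congruence. Qed.

Lemma pr_eval_comp f gs xs :
  pr_eval (PRcomp f gs) xs = pr_eval f (map (fun g => pr_eval g xs) gs).
Proof. simpl; f_equal; induction gs; simpl; congruence. Qed.

Lemma pr_eval_rec f g xs :
  pr_eval (PRrec f g) xs =
  recursor (pr_eval f (tl xs)) (fun m a => pr_eval g (m :: a :: tl xs)) (hd 0 xs).
Proof. simpl; induction (hd 0 xs); simpl; congruence. Qed.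

Definition pr_repr (k : nat) (f : list nat -> nat) : Prop :=
  exists p, forall e, length e = k -> pr_eval p e = f e.

Lemma pr_repr_ext k f g :
  (forall e, length e = k -> f e = g e) -> pr_repr k f -> pr_repr k g.
Proof. intros H [p Hp]; exists p; intros e He; rewrite Hp; auto. Qed.

Lemma pr_repr_var k j : pr_repr k (fun e => nth j e 0).
Proof. exists (PRproj j); reflexivity. Qed.

Fixpoint pr_const (c : nat) : PR :=
  match c with O => PRzero | S c' => PRcomp PRsucc [pr_const c'] end.

Lemma pr_repr_const k c : pr_repr k (fun _ => c).
Proof. exists (pr_const c); intros e _; induction c; simpl; auto. Qed.

Lemma pr_repr_succ : pr_repr 1 (fun e => S (nth 0 e 0)).
Proof. exists PRsucc; intros [|x e] _; reflexivity. Qed.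

Lemma pr_repr_tl k j X :
  pr_repr k (fun e => nth (S j) (X e) 0) -> pr_repr k (fun e => nth j (tl (X e)) 0).
Proof. apply pr_repr_ext; intros e _; destruct (X e); simpl; auto; destruct j; auto. Qed.

Lemma pr_repr_comp k j h gs :
  pr_repr j h -> length gs = j -> Forall (pr_repr k) gs ->
  pr_repr k (fun e => h (map (fun g => g e) gs)).
Proof.
  intros [ph Hh] Hl HF.
  assert (exists ps, forall e, length e = k ->
            map (fun p => pr_eval p e) ps = map (fun g => g e) gs) as [ps Hps].
  { clear Hl. induction HF as [|g gs [pg Hg] _ [ps Hps]].
    - exists []; auto.
    - exists (pg :: ps); intros e He; simpl; rewrite Hg, Hps; auto. }
  exists (PRcomp ph ps); intros e He. rewrite pr_eval_comp, Hps by auto.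
  apply Hh. rewrite length_map; auto.
Qed.

Lemma pr_repr_comp1 k h a :
  pr_repr 1 (fun e => h (nth 0 e 0)) -> pr_repr k a -> pr_repr k (fun e => h (a e)).
Proof. intros H Ha. apply (pr_repr_comp k 1 _ [a]) in H; auto. Qed.

Lemma pr_repr_comp2 k h a b :
  pr_repr 2 (fun e => h (nth 0 e 0) (nth 1 e 0)) -> pr_repr k a -> pr_repr k b ->
  pr_repr k (fun e => h (a e) (b e)).
Proof. intros H Ha Hb. apply (pr_repr_comp k 2 _ [a; b]) in H; auto. Qed.

Lemma pr_repr_comp3 k h a b c :
  pr_repr 3 (fun e => h (nth 0 e 0) (nth 1 e 0) (nth 2 e 0)) ->
  pr_repr k a -> pr_repr k b -> pr_repr k c ->
  pr_repr k (fun e => h (a e) (b e) (c e)).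
Proof. intros H Ha Hb Hc. apply (pr_repr_comp k 3 _ [a; b; c]) in H; auto. Qed.

Lemma map_nth_seq (e : list nat) : map (fun i => nth i e 0) (seq 0 (length e)) = e.
Proof.
  induction e as [|x e IH]; simpl; auto.
  f_equal. rewrite <- seq_shift, map_map. exact IH.
Qed.

Lemma pr_repr_recursor k b base s :
  pr_repr k b -> pr_repr k base ->
  pr_repr (S (S k)) (fun e => s (nth 0 e 0) (nth 1 e 0) (tl (tl e))) ->
  pr_repr k (fun e => recursor (base e) (fun m a => s m a e) (b e)).
Proof.
  intros [pb Hb] [pbase Hbase] [ps Hs].
  exists (PRcomp (PRrec pbase ps) (pb :: map PRproj (seq 0 k))).
  intros e He. transitivity (pr_eval (PRrec pbase ps) (b e :: e)).
  { rewrite pr_eval_comp. simpl. rewrite Hb, map_map by auto. simpl.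
    rewrite <- He, map_nth_seq. reflexivity. }
  rewrite pr_eval_rec. simpl. rewrite Hbase by auto.
  apply recursor_ext. intros m a. rewrite Hs; simpl; auto.
Qed.

(* Booleans are coded as zero (false) and nonzero (true). *)
Definition ifz (c x y : nat) : nat := match c with O => x | S _ => y end.
Definition sg b := ifz b 0 1.
Definition orn a b := ifz a (sg b) 1.
Definition andn a b := ifz a 0 (sg b).
Definition notn a := ifz a 1 0.
Definition eqn a b := notn ((a - b) + (b - a)).
Definition ltn a b := sg (b - a).
Definition bexn n (P : nat -> nat) := recursor 0 (fun m a => orn a (P m)) n.
Definition balln n (P : nat -> nat) := recursor 1 (fun m a => andn a (P m)) n.
Definition bminn n (P : nat -> nat) :=
  recursor 0 (fun m a => ifz (ltn a m) (ifz (P m) (S m) m) a) n.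

Create HintDb prdb.
#[export] Hint Resolve pr_repr_succ : prdb.

Ltac pr_auto := cbv beta; match goal with
 | |- pr_repr _ (fun _ => ?c) => apply pr_repr_const
 | |- pr_repr _ (fun e => nth _ e 0) => apply pr_repr_var
 | |- pr_repr ?k (fun e => nth ?j (tl (@?X e)) 0) => apply (pr_repr_tl k j X); pr_auto
 | |- pr_repr _ (fun e => bexn _ _) => unfold bexn; pr_auto
 | |- pr_repr _ (fun e => balln _ _) => unfold balln; pr_auto
 | |- pr_repr _ (fun e => bminn _ _) => unfold bminn; pr_auto
 | |- pr_repr ?k (fun e => recursor (@?base e) (fun m a => @?s m a e) (@?b e)) =>
     apply (pr_repr_recursor k b base s); pr_auto
 | |- pr_repr ?k (fun e => ?f (@?a e) (@?b e) (@?c e)) =>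
     apply (pr_repr_comp3 k f a b c); [solve [auto with prdb] | pr_auto | pr_auto | pr_auto]
 | |- pr_repr ?k (fun e => ?f (@?a e) (@?b e)) =>
     apply (pr_repr_comp2 k f a b); [solve [auto with prdb] | pr_auto | pr_auto]
 | |- pr_repr ?k (fun e => ?f (@?a e)) =>
     apply (pr_repr_comp1 k f a); [solve [auto with prdb] | pr_auto]
 end.

Ltac pr_auto_via f := apply (pr_repr_ext _ f); [intros ?e _ | pr_auto].

Lemma pr_repr_add : pr_repr 2 (fun e => nth 0 e 0 + nth 1 e 0).
Proof.
  pr_auto_via (fun e => recursor (nth 1 e 0) (fun _ a => S a) (nth 0 e 0)).
  induction (nth 0 e 0); simpl; auto.
Qed.

Lemma pr_repr_pred : pr_repr 1 (fun e => pred (nth 0 e 0)).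
Proof.
  pr_auto_via (fun e => recursor 0 (fun m _ => m) (nth 0 e 0)).
  destruct (nth 0 e 0); reflexivity.
Qed.
#[export] Hint Resolve pr_repr_add pr_repr_pred : prdb.

Lemma pr_repr_sub : pr_repr 2 (fun e => nth 0 e 0 - nth 1 e 0).
Proof.
  pr_auto_via (fun e => recursor (nth 0 e 0) (fun _ a => pred a) (nth 1 e 0)).
  induction (nth 1 e 0); simpl; lia.
Qed.

Lemma pr_repr_mul : pr_repr 2 (fun e => nth 0 e 0 * nth 1 e 0).
Proof.
  pr_auto_via (fun e => recursor 0 (fun _ a => a + nth 1 e 0) (nth 0 e 0)).
  induction (nth 0 e 0); simpl; lia.
Qed.
#[export] Hint Resolve pr_repr_sub pr_repr_mul : prdb.

Lemma pr_repr_pow : pr_repr 2 (fun e => nth 0 e 0 ^ nth 1 e 0).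
Proof.
  pr_auto_via (fun e => recursor 1 (fun _ a => a * nth 0 e 0) (nth 1 e 0)).
  induction (nth 1 e 0); simpl; lia.
Qed.

Lemma pr_repr_ifz : pr_repr 3 (fun e => ifz (nth 0 e 0) (nth 1 e 0) (nth 2 e 0)).
Proof.
  pr_auto_via (fun e => recursor (nth 1 e 0) (fun _ _ => nth 2 e 0) (nth 0 e 0)).
  destruct (nth 0 e 0); reflexivity.
Qed.
#[export] Hint Resolve pr_repr_pow pr_repr_ifz : prdb.

Lemma pr_repr_sg : pr_repr 1 (fun e => sg (nth 0 e 0)).
Proof. unfold sg; pr_auto. Qed.
#[export] Hint Resolve pr_repr_sg : prdb.
Lemma pr_repr_orn : pr_repr 2 (fun e => orn (nth 0 e 0) (nth 1 e 0)).
Proof. unfold orn; pr_auto. Qed.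
Lemma pr_repr_andn : pr_repr 2 (fun e => andn (nth 0 e 0) (nth 1 e 0)).
Proof. unfold andn; pr_auto. Qed.
Lemma pr_repr_notn : pr_repr 1 (fun e => notn (nth 0 e 0)).
Proof. unfold notn; pr_auto. Qed.
#[export] Hint Resolve pr_repr_orn pr_repr_andn pr_repr_notn : prdb.
Lemma pr_repr_eqn : pr_repr 2 (fun e => eqn (nth 0 e 0) (nth 1 e 0)).
Proof. unfold eqn; pr_auto. Qed.
Lemma pr_repr_ltn : pr_repr 2 (fun e => ltn (nth 0 e 0) (nth 1 e 0)).
Proof. unfold ltn; pr_auto. Qed.
#[export] Hint Resolve pr_repr_eqn pr_repr_ltn : prdb.

Lemma orn_nz a b : orn a b <> 0 <-> a <> 0 \/ b <> 0.
Proof. destruct a, b; simpl; intuition lia. Qed.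

Lemma andn_nz a b : andn a b <> 0 <-> a <> 0 /\ b <> 0.
Proof. destruct a, b; simpl; intuition lia. Qed.

Lemma notn_nz a : notn a <> 0 <-> a = 0.
Proof. destruct a; simpl; intuition lia. Qed.

Lemma eqn_nz a b : eqn a b <> 0 <-> a = b.
Proof. unfold eqn. rewrite notn_nz. lia. Qed.

Lemma eqn_z a b : eqn a b = 0 <-> a <> b.
Proof. unfold eqn, notn. destruct (a - b + (b - a)) eqn:E; simpl; split; intros; lia. Qed.

Lemma ltn_nz a b : ltn a b <> 0 <-> a < b.
Proof. unfold ltn. destruct (b - a) eqn:E; simpl; lia. Qed.

Lemma bexn_nz n P : bexn n P <> 0 <-> exists i, i < n /\ P i <> 0.
Proof.
  induction n; unfold bexn in *; simpl.
  - split; [lia | intros [i [Hi _]]; lia].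
  - rewrite orn_nz, IHn. split.
    + intros [[i [Hi Hp]] | Hp]; [exists i | exists n]; split; auto; lia.
    + intros [i [Hi Hp]].
      destruct (Nat.eq_dec i n); [subst; auto | left; exists i; split; auto; lia].
Qed.

Lemma balln_nz n P : balln n P <> 0 <-> forall i, i < n -> P i <> 0.
Proof.
  induction n; unfold balln in *; simpl.
  - split; intros; lia.
  - rewrite andn_nz, IHn. split.
    + intros [H1 H2] i Hi. destruct (Nat.eq_dec i n); [subst; auto | apply H1; lia].
    + intros H; split; intros; apply H; lia.
Qed.

Lemma bminn_spec n P :
  bminn n P <= n /\ (bminn n P < n -> P (bminn n P) <> 0) /\
  (forall j, j < bminn n P -> P j = 0).
Proof.
  induction n; unfold bminn in *; simpl.
  - repeat split; intros; lia.
  - set (a := recursor 0 _ n) in *. clearbody a. destruct IHn as [H1 [H2 H3]].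
    unfold ltn. destruct (n - a) eqn:E; simpl.
    + assert (a = n) as -> by lia. destruct (P n) eqn:Ep; simpl.
      * repeat split; try lia.
        intros j Hj. destruct (Nat.eq_dec j n); [subst; auto | apply H3; lia].
      * repeat split; intros; try lia; apply H3; lia.
    + repeat split; intros; try apply H2; try apply H3; lia.
Qed.

Lemma bminn_least n P i : i < n -> P i <> 0 -> bminn n P <= i /\ P (bminn n P) <> 0.
Proof.
  intros Hi Hp. destruct (bminn_spec n P) as [H1 [H2 H3]].
  assert (bminn n P <= i).
  { destruct (le_lt_dec (bminn n P) i); auto. exfalso; apply Hp, H3; auto. }
  split; auto. apply H2; lia.
Qed.

(** * Cantor pairing and coding of lists *)

Definition tri n := recursor 0 (fun m a => a + S m) n.

Lemma tri_S n : tri (S n) = tri n + S n. Proof. reflexivity. Qed.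

Lemma tri_ge n : n <= tri n. Proof. induction n; rewrite ?tri_S; simpl; lia. Qed.

Lemma tri_mono a b : a <= b -> tri a <= tri b.
Proof. induction 1; auto. rewrite tri_S; lia. Qed.

Definition cpair a b := tri (a + b) + b.
Definition cdiag z := bminn (S z) (fun n => ltn z (tri (S n))).
Definition csnd z := z - tri (cdiag z).
Definition cfst z := cdiag z - csnd z.

Lemma cdiag_pair a b : cdiag (cpair a b) = a + b.
Proof.
  unfold cdiag. set (z := cpair a b).
  assert (Hz : tri (a + b) <= z < tri (S (a + b))) by (unfold z, cpair; rewrite tri_S; lia).
  destruct (bminn_least (S z) (fun n => ltn z (tri (S n))) (a + b)) as [H1 H2].
  - pose proof (tri_ge (a + b)); unfold z, cpair; lia.
  - apply ltn_nz; lia.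
  - apply ltn_nz in H2. set (d := bminn _ _) in *.
    destruct (Nat.eq_dec d (a + b)); auto.
    assert (S d <= a + b) as Hd%tri_mono by lia. lia.
Qed.

Lemma csnd_pair a b : csnd (cpair a b) = b.
Proof. unfold csnd. rewrite cdiag_pair. unfold cpair. lia. Qed.

Lemma cfst_pair a b : cfst (cpair a b) = a.
Proof. unfold cfst. rewrite csnd_pair, cdiag_pair. lia. Qed.

Lemma cpair_ge a b : a <= cpair a b /\ b <= cpair a b.
Proof. unfold cpair. pose proof (tri_ge (a + b)). lia. Qed.

Lemma cpair_surj z : exists a b, cpair a b = z.
Proof.
  induction z as [|z [a [b H]]].
  - exists 0, 0; reflexivity.
  - unfold cpair in *. destruct a.
    + exists (S b), 0. rewrite !Nat.add_0_r, tri_S. rewrite Nat.add_0_l in H. lia.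
    + exists a, (S b). replace (a + S b) with (S a + b) by lia. lia.
Qed.

Lemma pr_repr_tri : pr_repr 1 (fun e => tri (nth 0 e 0)).
Proof. unfold tri; pr_auto. Qed.
#[export] Hint Resolve pr_repr_tri : prdb.
Lemma pr_repr_cpair : pr_repr 2 (fun e => cpair (nth 0 e 0) (nth 1 e 0)).
Proof. unfold cpair; pr_auto. Qed.
Lemma pr_repr_cdiag : pr_repr 1 (fun e => cdiag (nth 0 e 0)).
Proof. unfold cdiag; pr_auto. Qed.
#[export] Hint Resolve pr_repr_cpair pr_repr_cdiag : prdb.
Lemma pr_repr_csnd : pr_repr 1 (fun e => csnd (nth 0 e 0)).
Proof. unfold csnd; pr_auto. Qed.
#[export] Hint Resolve pr_repr_csnd : prdb.
Lemma pr_repr_cfst : pr_repr 1 (fun e => cfst (nth 0 e 0)).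
Proof. unfold cfst; pr_auto. Qed.
#[export] Hint Resolve pr_repr_cfst : prdb.

Definition lcons a c := S (cpair a c).

Fixpoint lcode (l : list nat) : nat :=
  match l with [] => 0 | a :: l' => lcons a (lcode l') end.

Definition lhead c := cfst (pred c).
Definition ltail c := ifz c 0 (csnd (pred c)).
Definition ldrop r c := recursor c (fun _ a => ltail a) r.
Definition lnth r c := lhead (ldrop r c).
Definition llen c := bminn (S c) (fun r => notn (ldrop r c)).

Lemma pr_repr_lhead : pr_repr 1 (fun e => lhead (nth 0 e 0)).
Proof. unfold lhead; pr_auto. Qed.
Lemma pr_repr_ltail : pr_repr 1 (fun e => ltail (nth 0 e 0)).
Proof. unfold ltail; pr_auto. Qed.
#[export] Hint Resolve pr_repr_lhead pr_repr_ltail : prdb.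
Lemma pr_repr_ldrop : pr_repr 2 (fun e => ldrop (nth 0 e 0) (nth 1 e 0)).
Proof. unfold ldrop; pr_auto. Qed.
#[export] Hint Resolve pr_repr_ldrop : prdb.
Lemma pr_repr_lnth : pr_repr 2 (fun e => lnth (nth 0 e 0) (nth 1 e 0)).
Proof. unfold lnth; pr_auto. Qed.
Lemma pr_repr_llen : pr_repr 1 (fun e => llen (nth 0 e 0)).
Proof. unfold llen; pr_auto. Qed.
Lemma pr_repr_lcons : pr_repr 2 (fun e => lcons (nth 0 e 0) (nth 1 e 0)).
Proof. unfold lcons; pr_auto. Qed.
#[export] Hint Resolve pr_repr_lnth pr_repr_llen pr_repr_lcons : prdb.

Lemma lhead_code l : lhead (lcode l) = hd 0 l.
Proof. destruct l; [reflexivity | apply cfst_pair]. Qed.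

Lemma ltail_code l : ltail (lcode l) = lcode (tl l).
Proof. destruct l; [reflexivity | apply csnd_pair]. Qed.

Lemma skipn_S_tl r (l : list nat) : skipn (S r) l = tl (skipn r l).
Proof.
  revert l; induction r; intros [|x l]; simpl; auto.
  rewrite <- IHr. destruct l; reflexivity.
Qed.

Lemma ldrop_code r l : ldrop r (lcode l) = lcode (skipn r l).
Proof.
  induction r; [reflexivity|].
  change (ldrop (S r) (lcode l)) with (ltail (ldrop r (lcode l))).
  rewrite IHr, ltail_code, skipn_S_tl. reflexivity.
Qed.

Lemma lnth_code r l : lnth r (lcode l) = nth r l 0.
Proof.
  unfold lnth. rewrite ldrop_code, lhead_code.
  revert l; induction r; intros [|x l]; simpl; auto.
Qed.

Lemma lcode_ge l : length l <= lcode l.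
Proof. induction l; simpl; auto. unfold lcons. pose proof (cpair_ge a (lcode l)); lia. Qed.

Lemma llen_code l : llen (lcode l) = length l.
Proof.
  unfold llen. pose proof (lcode_ge l).
  destruct (bminn_least (S (lcode l)) (fun r => notn (ldrop r (lcode l))) (length l)) as [H1 H2].
  - lia.
  - apply notn_nz. rewrite ldrop_code, skipn_all; reflexivity.
  - apply notn_nz in H2. rewrite ldrop_code in H2. set (d := bminn _ _) in *.
    destruct (skipn d l) eqn:E; [|discriminate].
    apply (f_equal (@length nat)) in E. rewrite length_skipn in E. simpl in E. lia.
Qed.

Lemma lcode_surj c : exists l, lcode l = c.
Proof.
  induction c as [[|c] IH] using lt_wf_ind.
  - exists []; auto.
  - destruct (cpair_surj c) as [a [b <-]]. destruct (IH b) as [l Hl].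
    + pose proof (cpair_ge a b); lia.
    + exists (a :: l); simpl; unfold lcons; congruence.
Qed.

(** * Computation traces *)

Fixpoint godel (p : PR) : nat :=
  match p with
  | PRzero => cpair 0 0
  | PRsucc => cpair 1 0
  | PRproj n => cpair 2 n
  | PRcomp f gs => cpair 3 (cpair (godel f) (lcode (map godel gs)))
  | PRrec f g => cpair 4 (cpair (godel f) (godel g))
  end.

Lemma godel_tag p :
  cfst (godel p) =
  match p with PRzero => 0 | PRsucc => 1 | PRproj _ => 2 | PRcomp _ _ => 3 | PRrec _ _ => 4 end.
Proof. destruct p; apply cfst_pair. Qed.

(* A trace is a coded list of entries [entry c i o], each recording that the program with
   code [c] outputs [o] on the argument list with code [i]. *)
Definition entry c i o := cpair c (cpair i o).
Definition fprog x := cfst x.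
Definition fin x := cfst (csnd x).
Definition fout x := csnd (csnd x).
Definition ftag x := cfst (fprog x).
Definition farg x := csnd (fprog x).
Definition farg1 x := cfst (farg x).
Definition farg2 x := csnd (farg x).

Lemma fprog_entry c i o : fprog (entry c i o) = c.
Proof. apply cfst_pair. Qed.
Lemma fin_entry c i o : fin (entry c i o) = i.
Proof. unfold fin, entry. rewrite csnd_pair; apply cfst_pair. Qed.
Lemma fout_entry c i o : fout (entry c i o) = o.
Proof. unfold fout, entry. rewrite !csnd_pair; auto. Qed.

Definition occurs t i x := bexn i (fun j => eqn (lnth j t) x).

(* The entry [x] of the trace [t] is justified by the entries of [t] before index [i]. *)
Definition comp_ok t i x :=
  bexn i (fun j =>
    andn (eqn (fprog (lnth j t)) (farg1 x))
   (andn (eqn (fout (lnth j t)) (fout x))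
   (andn (eqn (llen (fin (lnth j t))) (llen (farg2 x)))
     (balln (llen (farg2 x)) (fun r =>
        occurs t i (entry (lnth r (farg2 x)) (fin x) (lnth r (fin (lnth j t))))))))).

Definition rec_ok t i x :=
  ifz (lhead (fin x))
    (occurs t i (entry (farg1 x) (ltail (fin x)) (fout x)))
    (bexn i (fun j =>
       andn (andn (eqn (fprog (lnth j t)) (fprog x))
                  (eqn (fin (lnth j t)) (lcons (pred (lhead (fin x))) (ltail (fin x)))))
            (occurs t i (entry (farg2 x)
               (lcons (pred (lhead (fin x))) (lcons (fout (lnth j t)) (ltail (fin x))))
               (fout x))))).

Definition entry_ok t i x :=
  ifz (ftag x) (eqn (fout x) 0)
 (ifz (ftag x - 1) (eqn (fout x) (S (lhead (fin x))))
 (ifz (ftag x - 2) (eqn (fout x) (lnth (farg x) (fin x)))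
 (ifz (ftag x - 3) (comp_ok t i x)
 (ifz (ftag x - 4) (rec_ok t i x) 0)))).

Definition valid_trace t := balln (llen t) (fun i => entry_ok t i (lnth i t)).

Lemma pr_repr_entry : pr_repr 3 (fun e => entry (nth 0 e 0) (nth 1 e 0) (nth 2 e 0)).
Proof. unfold entry; pr_auto. Qed.
Lemma pr_repr_fprog : pr_repr 1 (fun e => fprog (nth 0 e 0)).
Proof. unfold fprog; pr_auto. Qed.
Lemma pr_repr_fin : pr_repr 1 (fun e => fin (nth 0 e 0)).
Proof. unfold fin; pr_auto. Qed.
Lemma pr_repr_fout : pr_repr 1 (fun e => fout (nth 0 e 0)).
Proof. unfold fout; pr_auto. Qed.
#[export] Hint Resolve pr_repr_entry pr_repr_fprog pr_repr_fin pr_repr_fout : prdb.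
Lemma pr_repr_ftag : pr_repr 1 (fun e => ftag (nth 0 e 0)).
Proof. unfold ftag; pr_auto. Qed.
Lemma pr_repr_farg : pr_repr 1 (fun e => farg (nth 0 e 0)).
Proof. unfold farg; pr_auto. Qed.
#[export] Hint Resolve pr_repr_ftag pr_repr_farg : prdb.
Lemma pr_repr_farg1 : pr_repr 1 (fun e => farg1 (nth 0 e 0)).
Proof. unfold farg1; pr_auto. Qed.
Lemma pr_repr_farg2 : pr_repr 1 (fun e => farg2 (nth 0 e 0)).
Proof. unfold farg2; pr_auto. Qed.
Lemma pr_repr_occurs : pr_repr 3 (fun e => occurs (nth 0 e 0) (nth 1 e 0) (nth 2 e 0)).
Proof. unfold occurs; pr_auto. Qed.
#[export] Hint Resolve pr_repr_farg1 pr_repr_farg2 pr_repr_occurs : prdb.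
Lemma pr_repr_comp_ok : pr_repr 3 (fun e => comp_ok (nth 0 e 0) (nth 1 e 0) (nth 2 e 0)).
Proof. unfold comp_ok; pr_auto. Qed.
Lemma pr_repr_rec_ok : pr_repr 3 (fun e => rec_ok (nth 0 e 0) (nth 1 e 0) (nth 2 e 0)).
Proof. unfold rec_ok; pr_auto. Qed.
#[export] Hint Resolve pr_repr_comp_ok pr_repr_rec_ok : prdb.
Lemma pr_repr_entry_ok : pr_repr 3 (fun e => entry_ok (nth 0 e 0) (nth 1 e 0) (nth 2 e 0)).
Proof. unfold entry_ok; pr_auto. Qed.
#[export] Hint Resolve pr_repr_entry_ok : prdb.
Lemma pr_repr_valid_trace : pr_repr 1 (fun e => valid_trace (nth 0 e 0)).
Proof. unfold valid_trace; pr_auto. Qed.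
#[export] Hint Resolve pr_repr_valid_trace : prdb.

Lemma occurs_nz t i x : occurs t i x <> 0 <-> exists j, j < i /\ lnth j t = x.
Proof.
  unfold occurs. rewrite bexn_nz.
  split; intros [j [H1 H2]]; exists j; split; auto; apply eqn_nz; auto.
Qed.

Lemma entry_ok_tag t i x k : ftag x = k ->
  entry_ok t i x =
  match k with
  | 0 => eqn (fout x) 0
  | 1 => eqn (fout x) (S (lhead (fin x)))
  | 2 => eqn (fout x) (lnth (farg x) (fin x))
  | 3 => comp_ok t i x
  | 4 => rec_ok t i x
  | _ => 0
  end.
Proof. intros H; unfold entry_ok; rewrite H. destruct k as [|[|[|[|[|k]]]]]; reflexivity. Qed.

Lemma farg_proj x n : fprog x = godel (PRproj n) -> farg x = n.
Proof. unfold farg; intros ->; apply csnd_pair. Qed.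

Lemma fargs_comp x f gs : fprog x = godel (PRcomp f gs) ->
  farg1 x = godel f /\ farg2 x = lcode (map godel gs).
Proof. unfold farg1, farg2, farg; intros ->; simpl; rewrite !csnd_pair, cfst_pair; auto. Qed.

Lemma fargs_rec x f g : fprog x = godel (PRrec f g) -> farg1 x = godel f /\ farg2 x = godel g.
Proof. unfold farg1, farg2, farg; intros ->; simpl; rewrite !csnd_pair, cfst_pair; auto. Qed.

Definition trace_correct_upto t i : Prop :=
  forall j p xs, j < i -> fprog (lnth j t) = godel p -> fin (lnth j t) = lcode xs ->
  pr_eval p xs = fout (lnth j t).

Lemma comp_args_sound t i gs xs ys : trace_correct_upto t i -> length ys = length gs ->
  (forall r, r < length gs ->
     occurs t i (entry (lnth r (lcode (map godel gs))) (lcode xs) (lnth r (lcode ys))) <> 0) ->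
  map (fun g => pr_eval g xs) gs = ys.
Proof.
  intros Hcor Hlen Hargs.
  apply nth_ext with (d := 0) (d' := 0); rewrite length_map; auto.
  intros r Hr. specialize (Hargs r Hr).
  apply occurs_nz in Hargs. destruct Hargs as [j [Hj E]].
  rewrite !lnth_code in E.
  rewrite (nth_indep _ _ (pr_eval PRzero xs)) by (rewrite length_map; auto).
  rewrite (map_nth (fun g => pr_eval g xs) gs PRzero r).
  rewrite (Hcor j (nth r gs PRzero) xs Hj).
  - rewrite E, fout_entry. reflexivity.
  - rewrite E, fprog_entry, <- (map_nth godel). reflexivity.
  - rewrite E, fin_entry. reflexivity.
Qed.

Lemma entry_ok_sound t i x p xs : trace_correct_upto t i -> entry_ok t i x <> 0 ->
  fprog x = godel p -> fin x = lcode xs -> pr_eval p xs = fout x.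
Proof.
  intros Hcor Hx Hc Hin.
  assert (Hcor' : forall j q ys, j < i -> lnth j t = entry (godel q) (lcode ys) (fout x) ->
                    pr_eval q ys = fout x).
  { intros j q ys Hj E. rewrite (Hcor j q ys Hj); rewrite E;
      auto using fout_entry, fprog_entry, fin_entry. }
  rewrite (entry_ok_tag _ _ _ _ (eq_trans (f_equal cfst Hc) (godel_tag p))) in Hx.
  destruct p as [| |n|f gs|f g].
  - apply eqn_nz in Hx. auto.
  - apply eqn_nz in Hx. rewrite Hx, Hin, lhead_code. destruct xs; reflexivity.
  - apply eqn_nz in Hx. rewrite Hx, Hin, lnth_code, (farg_proj _ _ Hc). reflexivity.
  - destruct (fargs_comp _ _ _ Hc) as [Hf Hgs]. unfold comp_ok in Hx.
    rewrite Hf, Hgs, llen_code, length_map, bexn_nz in Hx. destruct Hx as [j [Hj Hx]].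
    rewrite !andn_nz, !eqn_nz, balln_nz in Hx. destruct Hx as [Hfj [Hout [Hlen Hargs]]].
    destruct (lcode_surj (fin (lnth j t))) as [ys Hys].
    rewrite <- Hys, llen_code in Hlen. rewrite <- Hys, Hin in Hargs.
    rewrite pr_eval_comp, (comp_args_sound t i gs xs ys), <- Hout by auto.
    apply Hcor; auto.
  - destruct (fargs_rec _ _ _ Hc) as [Hf Hg]. unfold rec_ok in Hx.
    rewrite Hf, Hg, Hin, lhead_code, ltail_code in Hx. rewrite pr_eval_rec.
    destruct xs as [|[|m] ys]; simpl in Hx |- *.
    + apply occurs_nz in Hx. destruct Hx as [j [Hj E]]. apply (Hcor' j); auto.
    + apply occurs_nz in Hx. destruct Hx as [j [Hj E]]. apply (Hcor' j); auto.
    + apply bexn_nz in Hx. destruct Hx as [j [Hj Hx]].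
      rewrite !andn_nz, !eqn_nz, occurs_nz in Hx. destruct Hx as [[Hpj Hinj] [j2 [Hj2 E]]].
      assert (Hr : pr_eval (PRrec f g) (m :: ys) = fout (lnth j t))
        by (apply Hcor; auto; rewrite Hpj; auto).
      rewrite pr_eval_rec in Hr. simpl in Hr. rewrite Hr. apply (Hcor' j2); auto.
Qed.

Theorem valid_trace_sound t : valid_trace t <> 0 -> trace_correct_upto t (llen t).
Proof.
  unfold valid_trace. rewrite balln_nz. intros Hv.
  enough (forall i, i <= llen t -> trace_correct_upto t i) by auto.
  induction i as [|i IH]; intros Hi j p xs Hj; [lia|].
  destruct (Nat.eq_dec j i) as [->|]; [|apply IH; lia].
  apply (entry_ok_sound t i); [apply IH | apply Hv]; lia.
Qed.

Section TraceEmbedding.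
Variables (t t' i i' : nat).
Hypothesis Hemb : forall j', j' < i' -> exists j, j < i /\ lnth j t = lnth j' t'.

Lemma occurs_mono x : occurs t' i' x <> 0 -> occurs t i x <> 0.
Proof.
  rewrite !occurs_nz. intros [j' [Hj' E]]. destruct (Hemb j' Hj') as [j [Hj E']].
  exists j; split; congruence.
Qed.

Lemma comp_ok_mono x : comp_ok t' i' x <> 0 -> comp_ok t i x <> 0.
Proof.
  unfold comp_ok. rewrite !bexn_nz. intros [j' [Hj' Hb]].
  destruct (Hemb j' Hj') as [j [Hj E]]. exists j; split; auto. rewrite E.
  revert Hb. rewrite !andn_nz, !balln_nz. intros [H1 [H2 [H3 H4]]]. repeat split; auto.
  intros r Hr. apply occurs_mono, H4; auto.
Qed.

Lemma rec_ok_mono x : rec_ok t' i' x <> 0 -> rec_ok t i x <> 0.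
Proof.
  unfold rec_ok. destruct (lhead (fin x)); simpl.
  - apply occurs_mono.
  - rewrite !bexn_nz. intros [j' [Hj' Hb]].
    destruct (Hemb j' Hj') as [j [Hj E]]. exists j; split; auto. rewrite E.
    revert Hb. rewrite !andn_nz. intros [H1 H2]. split; auto. apply occurs_mono; auto.
Qed.

Lemma entry_ok_mono x : entry_ok t' i' x <> 0 -> entry_ok t i x <> 0.
Proof.
  unfold entry_ok. destruct (ftag x) as [|[|[|[|[|k]]]]]; simpl; auto.
  - apply comp_ok_mono.
  - apply rec_ok_mono.
Qed.

End TraceEmbedding.

Lemma valid_trace_iff l : valid_trace (lcode l) <> 0 <->
  forall i, i < length l -> entry_ok (lcode l) i (nth i l 0) <> 0.
Proof.
  unfold valid_trace. rewrite balln_nz, llen_code.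
  split; intros H i Hi; specialize (H i Hi); rewrite lnth_code in *; auto.
Qed.

Lemma lnth_app_l l1 l2 j : j < length l1 -> lnth j (lcode (l1 ++ l2)) = lnth j (lcode l1).
Proof. intros; rewrite !lnth_code, app_nth1; auto. Qed.

Lemma lnth_app_r l1 l2 j : lnth (length l1 + j) (lcode (l1 ++ l2)) = lnth j (lcode l2).
Proof. rewrite !lnth_code, app_nth2 by lia. f_equal; lia. Qed.

Lemma valid_trace_app l1 l2 :
  valid_trace (lcode l1) <> 0 -> valid_trace (lcode l2) <> 0 ->
  valid_trace (lcode (l1 ++ l2)) <> 0.
Proof.
  rewrite !valid_trace_iff. intros H1 H2 i Hi. rewrite length_app in Hi.
  destruct (lt_dec i (length l1)).
  - rewrite app_nth1 by auto. apply (entry_ok_mono _ (lcode l1) _ i); auto.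
    intros j' Hj'. exists j'; split; auto. apply lnth_app_l; lia.
  - replace i with (length l1 + (i - length l1)) by lia.
    rewrite app_nth2_plus. apply (entry_ok_mono _ (lcode l2) _ (i - length l1)); [|apply H2; lia].
    intros j' Hj'. exists (length l1 + j'); split; [lia|]. apply lnth_app_r.
Qed.

Lemma valid_trace_snoc l x :
  valid_trace (lcode l) <> 0 -> entry_ok (lcode (l ++ [x])) (length l) x <> 0 ->
  valid_trace (lcode (l ++ [x])) <> 0.
Proof.
  rewrite !valid_trace_iff. intros H1 H2 i Hi. rewrite length_app in Hi; simpl in Hi.
  destruct (lt_dec i (length l)).
  - rewrite app_nth1 by auto. apply (entry_ok_mono _ (lcode l) _ i); auto.
    intros j' Hj'. exists j'; split; auto. apply lnth_app_l; lia.
  - replace i with (length l) by lia. rewrite nth_middle. auto.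
Qed.

Lemma In_lnth l r x : In x l -> exists j, j < length l /\ lnth j (lcode (l ++ r)) = x.
Proof.
  intros H. apply In_nth with (d := 0) in H. destruct H as [j [Hj H]].
  exists j; split; auto. rewrite lnth_app_l, lnth_code; auto.
Qed.

Lemma occurs_In l r x : In x l -> occurs (lcode (l ++ r)) (length l) x <> 0.
Proof. intros H. apply occurs_nz, In_lnth, H. Qed.

Definition traced (p : PR) : Prop :=
  forall xs, exists l, valid_trace (lcode l) <> 0 /\
                       In (entry (godel p) (lcode xs) (pr_eval p xs)) l.

Lemma traced_snoc l x :
  valid_trace (lcode l) <> 0 -> entry_ok (lcode (l ++ [x])) (length l) x <> 0 ->
  exists l', valid_trace (lcode l') <> 0 /\ In x l'.
Proof.
  intros Hl Hx. exists (l ++ [x]). split; [apply valid_trace_snoc; auto|].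
  apply in_or_app; right; left; auto.
Qed.

Lemma traced_atom p : cfst (godel p) <= 2 -> traced p.
Proof.
  intros Hp xs. apply (traced_snoc []); [apply valid_trace_iff; simpl; lia|].
  set (x := entry _ _ _). assert (Hc : fprog x = godel p) by apply fprog_entry.
  rewrite (entry_ok_tag _ _ _ _ (eq_trans (f_equal cfst Hc) (godel_tag p))).
  rewrite godel_tag in Hp. destruct p; try lia; apply eqn_nz.
  - apply fout_entry.
  - unfold x; rewrite fout_entry, fin_entry, lhead_code. destruct xs; reflexivity.
  - rewrite (farg_proj _ _ Hc); unfold x; rewrite fout_entry, fin_entry, lnth_code. reflexivity.
Qed.

Lemma traced_all gs : Forall traced gs -> forall xs, exists l,
  valid_trace (lcode l) <> 0 /\
  forall g, In g gs -> In (entry (godel g) (lcode xs) (pr_eval g xs)) l.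
Proof.
  intros Hgs xs. induction Hgs as [|g gs Hg _ [l [Hl Hin]]].
  - exists []; split; [apply valid_trace_iff; simpl; lia | intros g []].
  - destruct (Hg xs) as [l1 [H1 H2]]. exists (l1 ++ l); split; [apply valid_trace_app; auto|].
    intros g' [<- | Hg']; apply in_or_app; auto.
Qed.

Lemma traced_comp f gs : traced f -> Forall traced gs -> traced (PRcomp f gs).
Proof.
  intros Hf Hgs xs. destruct (traced_all gs Hgs xs) as [L [HL HLin]].
  set (ys := map (fun g => pr_eval g xs) gs).
  destruct (Hf ys) as [Lf [HLf HLfin]].
  apply (traced_snoc (L ++ Lf)); [apply valid_trace_app; auto|].
  set (x := entry _ _ _). assert (Hc : fprog x = godel (PRcomp f gs)) by apply fprog_entry.
  rewrite (entry_ok_tag _ _ _ _ (eq_trans (f_equal cfst Hc) (godel_tag _))).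
  destruct (fargs_comp _ _ _ Hc) as [Hfa Hgsa]. unfold comp_ok.
  rewrite Hfa, Hgsa, llen_code, length_map. apply bexn_nz.
  destruct (In_lnth (L ++ Lf) [x] (entry (godel f) (lcode ys) (pr_eval f ys))) as [j [Hj Ej]].
  { apply in_or_app; auto. }
  exists j; split; auto. rewrite Ej, !andn_nz, !eqn_nz, balln_nz.
  unfold x, ys; rewrite pr_eval_comp, fprog_entry, !fout_entry, !fin_entry, llen_code, length_map.
  repeat split; auto.
  intros r Hr. apply occurs_In, in_or_app. left.
  rewrite !lnth_code, (nth_indep (map godel gs) 0 (godel PRzero)) by (rewrite length_map; auto).
  rewrite map_nth.
  rewrite (nth_indep _ _ (pr_eval PRzero xs)) by (rewrite length_map; auto).
  rewrite (map_nth (fun g => pr_eval g xs) gs PRzero r).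
  apply HLin, nth_In; auto.
Qed.

Lemma traced_rec_base f g xs : traced f -> hd 0 xs = 0 -> exists l,
  valid_trace (lcode l) <> 0 /\
  In (entry (godel (PRrec f g)) (lcode xs) (pr_eval (PRrec f g) xs)) l.
Proof.
  intros Hf Hxs. destruct (Hf (tl xs)) as [Lf [HLf HLfin]].
  apply (traced_snoc Lf); auto.
  set (x := entry _ _ _). assert (Hc : fprog x = godel (PRrec f g)) by apply fprog_entry.
  rewrite (entry_ok_tag _ _ _ _ (eq_trans (f_equal cfst Hc) (godel_tag _))).
  destruct (fargs_rec _ _ _ Hc) as [Hfa _].
  assert (Hout : fout x = pr_eval f (tl xs))
    by (unfold x; rewrite fout_entry, pr_eval_rec, Hxs; reflexivity).
  assert (Hin : fin x = lcode xs) by apply fin_entry.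
  clearbody x. unfold rec_ok.
  rewrite Hin, Hout, Hfa, lhead_code, ltail_code, Hxs. apply occurs_In, HLfin.
Qed.

Lemma traced_rec_step f g n ys : traced g ->
  (exists l, valid_trace (lcode l) <> 0 /\
     In (entry (godel (PRrec f g)) (lcode (n :: ys)) (pr_eval (PRrec f g) (n :: ys))) l) ->
  exists l, valid_trace (lcode l) <> 0 /\
     In (entry (godel (PRrec f g)) (lcode (S n :: ys)) (pr_eval (PRrec f g) (S n :: ys))) l.
Proof.
  intros Hg [L1 [HL1 HL1in]].
  set (v := pr_eval (PRrec f g) (n :: ys)) in *.
  destruct (Hg (n :: v :: ys)) as [Lg [HLg HLgin]].
  apply (traced_snoc (L1 ++ Lg)); [apply valid_trace_app; auto|].
  set (x := entry _ _ _). assert (Hc : fprog x = godel (PRrec f g)) by apply fprog_entry.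
  rewrite (entry_ok_tag _ _ _ _ (eq_trans (f_equal cfst Hc) (godel_tag _))).
  destruct (fargs_rec _ _ _ Hc) as [_ Hga].
  assert (Hout : fout x = pr_eval g (n :: v :: ys))
    by (unfold x, v; rewrite fout_entry, !pr_eval_rec; reflexivity).
  assert (Hin : fin x = lcode (S n :: ys)) by apply fin_entry.
  clearbody x. unfold rec_ok.
  rewrite Hin, Hout, Hga, lhead_code, ltail_code, Hc. cbv [ifz hd tl pred].
  apply bexn_nz.
  destruct (In_lnth (L1 ++ Lg) [x] (entry (godel (PRrec f g)) (lcode (n :: ys)) v)) as [j [Hj Ej]].
  { apply in_or_app; auto. }
  exists j; split; auto. rewrite Ej, fprog_entry, fin_entry, fout_entry, !andn_nz, !eqn_nz.
  repeat split; auto. apply occurs_In, in_or_app; auto.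
Qed.

Fixpoint PR_ind_nested (P : PR -> Prop) (H0 : P PRzero) (H1 : P PRsucc)
  (H2 : forall n, P (PRproj n))
  (H3 : forall f gs, P f -> Forall P gs -> P (PRcomp f gs))
  (H4 : forall f g, P f -> P g -> P (PRrec f g)) (p : PR) {struct p} : P p :=
  match p with
  | PRzero => H0
  | PRsucc => H1
  | PRproj n => H2 n
  | PRcomp f gs => H3 f gs (PR_ind_nested P H0 H1 H2 H3 H4 f)
      ((fix F (l : list PR) : Forall P l :=
          match l with
          | [] => Forall_nil P
          | g :: l' => Forall_cons g (PR_ind_nested P H0 H1 H2 H3 H4 g) (F l')
          end) gs)
  | PRrec f g => H4 f g (PR_ind_nested P H0 H1 H2 H3 H4 f) (PR_ind_nested P H0 H1 H2 H3 H4 g)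
  end.

Theorem traced_pr p : traced p.
Proof.
  induction p as [| |n|f gs IHf IHgs|f g IHf IHg] using PR_ind_nested.
  1-3: apply traced_atom; rewrite godel_tag; lia.
  - apply traced_comp; auto.
  - intros [|n ys]; [apply traced_rec_base; auto|].
    induction n; [apply traced_rec_base | apply traced_rec_step]; auto.
Qed.

Theorem pr_eval_iff_trace p xs y : pr_eval p xs = y <->
  exists t, valid_trace t <> 0 /\ occurs t (llen t) (entry (godel p) (lcode xs) y) <> 0.
Proof.
  split.
  - intros <-. destruct (traced_pr p xs) as [l [Hl Hin]].
    exists (lcode l). split; auto. rewrite llen_code, <- (app_nil_r l) at 1. apply occurs_In, Hin.
  - intros [t [Ht Ho]]. apply occurs_nz in Ho. destruct Ho as [i [Hi E]].
    rewrite (valid_trace_sound t Ht i p xs Hi); rewrite E;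
      auto using fout_entry, fprog_entry, fin_entry.
Qed.

(** * Counting and densities *)

Lemma count_S X n : count_below X (S n) = count_below X n + (if X n then 1 else 0).
Proof. reflexivity. Qed.

Lemma count_false n : count_below (fun _ => false) n = 0.
Proof. induction n as [|n IH]; [reflexivity | rewrite count_S, IH; reflexivity]. Qed.

Lemma count_le X n : count_below X n <= n.
Proof. induction n; rewrite ?count_S; [simpl; lia | destruct (X n); lia]. Qed.

Lemma count_mono X Y n :
  (forall x, X x = true -> Y x = true) -> count_below X n <= count_below Y n.
Proof.
  intros H; induction n; rewrite ?count_S; [simpl; lia|].
  destruct (X n) eqn:E; [rewrite (H n E) | destruct (Y n)]; lia.
Qed.

Lemma count_pos X a n : X a = true -> a < n -> 1 <= count_below X n.
Proof.
  intros Ha. induction n; intros Hn; [lia|]. rewrite count_S.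
  destruct (Nat.eq_dec a n); [subst; rewrite Ha; lia | specialize (IHn ltac:(lia)); lia].
Qed.

Lemma count_le1 X a n : (forall x, x < n -> X x = true -> x = a) -> count_below X n <= 1.
Proof.
  intros H. induction n; [simpl; lia|]. rewrite count_S.
  destruct (X n) eqn:E.
  - assert (n = a) by (apply H; auto). subst a.
    enough (forall m, m <= n -> count_below X m = 0) by (rewrite H0; lia).
    induction m; intros Hm; [reflexivity|]. rewrite count_S, IHm by lia.
    destruct (X m) eqn:E'; auto. apply H in E'; lia.
  - assert (count_below X n <= 1) by (apply IHn; intros x Hx; apply H; lia). lia.
Qed.

Lemma count_cover Y Z1 Z2 K :
  (forall x, K <= x -> Y x = true -> Z1 x = true \/ Z2 x = true) ->
  forall n, count_below Y n <= count_below Z1 n + count_below Z2 n + K.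
Proof.
  intros H n. enough (count_below Y n <= count_below Z1 n + count_below Z2 n + min n K) by lia.
  induction n; [simpl; lia|]. rewrite !count_S.
  destruct (le_lt_dec K n) as [HK|HK].
  - destruct (Y n) eqn:E; [|destruct (Z1 n), (Z2 n); lia].
    destruct (H n HK E) as [E1|E2]; [rewrite E1 | rewrite E2]; destruct (Z1 n), (Z2 n); lia.
  - destruct (Y n), (Z1 n), (Z2 n); lia.
Qed.

Lemma count_periodic X P : (forall x, X (x + P) = X x) ->
  forall q r, count_below X (q * P + r) = q * count_below X P + count_below X r.
Proof.
  intros H q r.
  assert (Hadd : forall n, count_below X (n + P) = count_below X n + count_below X P).
  { induction n; [reflexivity|]. simpl Nat.add. rewrite !count_S, IHn, H. lia. }
  induction q; [reflexivity|].
  replace (S q * P + r) with ((q * P + r) + P) by lia. rewrite Hadd, IHq. lia.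
Qed.

Lemma periodic_count_bound X P : 0 < P -> (forall x, X (x + P) = X x) -> forall n,
  count_below X n * P <= n * count_below X P + P * P /\
  n * count_below X P <= count_below X n * P + P * P.
Proof.
  intros HP Hper n. pose proof (Nat.div_mod n P ltac:(lia)) as Hn.
  pose proof (Nat.mod_upper_bound n P ltac:(lia)) as Hr.
  set (q := n / P) in *. set (r := n mod P) in *. clearbody q r. subst n.
  rewrite Nat.mul_comm with (n := P), count_periodic by auto.
  pose proof (count_le X r). pose proof (count_le X P).
  set (c := count_below X P) in *. set (cr := count_below X r) in *. nia.
Qed.

(* [rho_n X] is within [1/P + C/n] of [c/P]. *)
Definition approx_density (X : natset) (P c C : nat) : Prop :=
  forall n, count_below X n * P <= n * c + n + C /\ n * c <= count_below X n * P + n + C.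

Local Open Scope R_scope.

Lemma approx_density_rho X P c C n : (1 <= P)%nat -> approx_density X P c C ->
  Rabs (rho_seq X n - INR c / INR P) <= 1 / INR P + INR C / INR (S n).
Proof.
  intros HP HX. destruct (HX (S n)) as [H1 H2]. unfold rho_seq, rho.
  apply le_INR in H1, H2, HP. rewrite ?plus_INR, ?mult_INR in H1, H2. simpl in HP.
  pose proof (lt_0_INR (S n) ltac:(lia)). pose proof (pos_INR C).
  set (A := INR (count_below X (S n))) in *. set (N := INR (S n)) in *.
  set (Cc := INR c) in *. set (Pp := INR P) in *. set (D := INR C) in *.
  replace (A / N - Cc / Pp) with ((A * Pp - N * Cc) / (N * Pp)) by (field; lra).
  replace (1 / Pp + D / N) with ((N + D * Pp) / (N * Pp)) by (field; lra).
  rewrite Rabs_div by nra. rewrite (Rabs_right (N * Pp)) by nra.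
  apply Rmult_le_compat_r; [apply Rlt_le, Rinv_0_lt_compat; nra|].
  apply Rabs_le; split; nra.
Qed.

Theorem has_density_of_approx X :
  (forall N, exists P c C, (N < P)%nat /\ approx_density X P c C) -> has_density X.
Proof.
  intros HA. unfold has_density. apply ex_lim_seq_cauchy_corr. intros eps.
  assert (Heps := cond_pos eps).
  destruct (INR_unbounded (4 / eps)) as [N HN].
  destruct (HA N) as [P [c [C [HNP HX]]]].
  assert (HP : 4 / eps < INR P) by (apply Rlt_trans with (INR N); auto; apply lt_INR; lia).
  destruct (INR_unbounded (4 * INR C / eps)) as [M HM].
  assert (Key : forall k, (M <= k)%nat -> Rabs (rho_seq X k - INR c / INR P) < eps / 2).
  { intros k Hk. eapply Rle_lt_trans; [apply approx_density_rho; [lia | exact HX]|].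
    assert (0 < INR P) by (apply lt_0_INR; lia).
    assert (INR M <= INR (S k)) by (apply le_INR; lia).
    pose proof (lt_0_INR (S k) ltac:(lia)).
    assert (1 / INR P < eps / 4).
    { apply (Rmult_lt_reg_r (INR P * 4 / eps)); [apply Rdiv_lt_0_compat; lra|].
      replace (1 / INR P * (INR P * 4 / eps)) with (4 / eps) by (field; lra).
      replace (eps / 4 * (INR P * 4 / eps)) with (INR P) by (field; lra). auto. }
    assert (INR C / INR (S k) < eps / 4).
    { apply (Rmult_lt_reg_r (INR (S k) * 4 / eps)); [apply Rdiv_lt_0_compat; lra|].
      replace (INR C / INR (S k) * (INR (S k) * 4 / eps)) with (4 * INR C / eps) by (field; lra).
      replace (eps / 4 * (INR (S k) * 4 / eps)) with (INR (S k)) by (field; lra). lra. }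
    lra. }
  exists M. intros n m Hn Hm. pose proof (Key n Hn). pose proof (Key m Hm).
  replace (rho_seq X n - rho_seq X m)
    with ((rho_seq X n - INR c / INR P) - (rho_seq X m - INR c / INR P)) by ring.
  eapply Rle_lt_trans; [apply Rabs_triang|]. rewrite Rabs_Ropp. lra.
Qed.

Theorem lower_density_pos_periodic (X Y : natset) (P a : nat) :
  (forall x, X (x + P)%nat = X x) -> (a < P)%nat -> X a = true ->
  (forall x, X x = true -> Y x = true) -> Rbar_lt 0 (lower_density Y).
Proof.
  intros Hper HaP Ha HXY.
  assert (Hc : (1 <= count_below X P)%nat) by (apply count_pos with a; auto).
  assert (HP : 0 < INR P) by (apply lt_0_INR; lia).
  apply Rbar_lt_le_trans with (Finite (1 / (2 * INR P))).
  { simpl. apply Rdiv_lt_0_compat; lra. }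
  unfold lower_density. rewrite <- (LimInf_seq_const (1 / (2 * INR P))). apply LimInf_le.
  exists (2 * P * P)%nat. intros k Hk. unfold rho_seq, rho.
  destruct (periodic_count_bound X P ltac:(lia) Hper (S k)) as [_ H2].
  pose proof (count_mono X Y (S k) HXY).
  assert (Hnat : (S k <= 2 * P * count_below Y (S k))%nat) by nia.
  apply le_INR in Hnat. rewrite !mult_INR in Hnat. simpl (INR 2) in Hnat.
  pose proof (lt_0_INR (S k) ltac:(lia)).
  apply (Rmult_le_reg_r (2 * INR P * INR (S k))); [nra|].
  replace (1 / (2 * INR P) * (2 * INR P * INR (S k))) with (INR (S k)) by (field; lra).
  replace (INR (count_below Y (S k)) / INR (S k) * (2 * INR P * INR (S k)))
    with (2 * INR P * INR (count_below Y (S k))) by (field; lra). lra.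
Qed.

Local Open Scope nat_scope.

(** * The columns [x + 1 = 2^(e+1) * odd] *)

Definition col e k := 2 ^ (e + 1) * (2 * k + 1) - 1.
Definition in_col e x := Nat.eqb ((x + 1) mod 2 ^ (e + 2)) (2 ^ (e + 1)).
Definition deep N x := Nat.eqb ((x + 1) mod 2 ^ (N + 1)) 0.

Lemma pow2_gt0 n : 0 < 2 ^ n.
Proof. induction n; simpl; lia. Qed.

Lemma pow2_gt n : n < 2 ^ n.
Proof. induction n; simpl; lia. Qed.

Lemma pow2_succ e : 2 ^ (e + 2) = 2 * 2 ^ (e + 1).
Proof. replace (e + 2) with (S (e + 1)) by lia. reflexivity. Qed.

Lemma col_ge e k : e <= col e k /\ k <= col e k.
Proof.
  unfold col. pose proof (pow2_gt (e + 1)). nia.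
Qed.

Lemma col_lt e k k' : k < k' -> col e k < col e k'.
Proof. unfold col. pose proof (pow2_gt0 (e + 1)). nia. Qed.

Lemma col_le e k k' : col e k <= col e k' -> k <= k'.
Proof. intros H. destruct (le_lt_dec k k') as [|Hlt]; auto. apply (col_lt e) in Hlt. lia. Qed.

Lemma in_col_spec e x : in_col e x = true <-> exists k, x = col e k.
Proof.
  unfold in_col, col. rewrite Nat.eqb_eq, pow2_succ. pose proof (pow2_gt0 (e + 1)).
  set (P := 2 ^ (e + 1)) in *. clearbody P. split.
  - intros Hm. pose proof (Nat.div_mod (x + 1) (2 * P) ltac:(lia)) as Hd. rewrite Hm in Hd.
    exists ((x + 1) / (2 * P)). nia.
  - intros [k Hk]. symmetry. apply Nat.mod_unique with k; nia.
Qed.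

Lemma in_col_periodic e m x : in_col e (x + m * 2 ^ (e + 2)) = in_col e x.
Proof.
  unfold in_col. replace (x + m * 2 ^ (e + 2) + 1) with (x + 1 + m * 2 ^ (e + 2)) by lia.
  rewrite Nat.Div0.mod_add. reflexivity.
Qed.

Lemma deep_periodic N x : deep N (x + 2 ^ (N + 1)) = deep N x.
Proof.
  unfold deep. replace (x + 2 ^ (N + 1) + 1) with (x + 1 + 1 * 2 ^ (N + 1)) by lia.
  rewrite Nat.Div0.mod_add. reflexivity.
Qed.

Lemma deep_count N : count_below (deep N) (2 ^ (N + 1)) <= 1.
Proof.
  apply count_le1 with (a := 2 ^ (N + 1) - 1). intros x Hx E. unfold deep in E.
  apply Nat.eqb_eq in E. destruct (Nat.eq_dec (x + 1) (2 ^ (N + 1))); [lia|].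
  rewrite Nat.mod_small in E by lia. lia.
Qed.

Lemma deep_col N e k : N <= e -> deep N (col e k) = true.
Proof.
  intros He. unfold deep, col. apply Nat.eqb_eq. pose proof (pow2_gt0 (e + 1)).
  replace (2 ^ (e + 1) * (2 * k + 1) - 1 + 1) with (2 ^ (e + 1) * (2 * k + 1)) by lia.
  replace (e + 1) with ((e - N) + (N + 1)) by lia. rewrite Nat.pow_add_r.
  replace (2 ^ (e - N) * 2 ^ (N + 1) * (2 * k + 1))
    with ((2 ^ (e - N) * (2 * k + 1)) * 2 ^ (N + 1)) by ring.
  apply Nat.Div0.mod_mul.
Qed.

Lemma col_inj e k e' k' : col e k = col e' k' -> e = e' /\ k = k'.
Proof.
  intros H.
  assert (Hcol : forall e e' k k', e < e' -> col e k <> col e' k').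
  { intros a b i j Hab E. assert (Ha : in_col a (col a i) = true) by (apply in_col_spec; eauto).
    pose proof (deep_col (a + 1) b j ltac:(lia)) as Hd. rewrite <- E in Hd.
    unfold in_col, deep in *. apply Nat.eqb_eq in Ha, Hd.
    replace (a + 1 + 1) with (a + 2) in Hd by lia. pose proof (pow2_gt0 (a + 1)). lia. }
  assert (e = e') as <-.
  { destruct (lt_eq_lt_dec e e') as [[Hlt|]|Hlt]; auto; exfalso; eapply Hcol; eauto. }
  split; auto. apply Nat.le_antisymm; apply (col_le e); lia.
Qed.

Lemma lower_density_pos_col e (Y : natset) :
  (forall k, Y (col e k) = true) -> Rbar_lt (Finite 0%R) (lower_density Y).
Proof.
  intros HY. apply (lower_density_pos_periodic (in_col e) Y (2 ^ (e + 2)) (col e 0)).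
  - intros x. rewrite <- (in_col_periodic e 1 x). f_equal. lia.
  - unfold col. rewrite pow2_succ. pose proof (pow2_gt0 (e + 1)). lia.
  - apply in_col_spec; eauto.
  - intros x [k ->]%in_col_spec. auto.
Qed.

(** * The diagonal set *)

Lemma bounded_choice (P : nat -> nat -> Prop) n :
  (forall i M M', M <= M' -> P i M -> P i M') ->
  (forall i, i < n -> exists M, P i M) -> exists M, forall i, i < n -> P i M.
Proof.
  intros Hmono H. induction n as [|n IH].
  - exists 0; intros; lia.
  - destruct IH as [M1 H1]; [intros i Hi; apply H; lia|].
    destruct (H n ltac:(lia)) as [M2 H2]. exists (max M1 M2).
    intros i Hi. destruct (Nat.eq_dec i n) as [->|].
    + apply (Hmono n M2); auto; lia.
    + apply (Hmono i M1); [lia | apply H1; lia].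
Qed.

Lemma existsb_ext_in {A} (f g : A -> bool) l :
  (forall x, In x l -> f x = g x) -> existsb f l = existsb g l.
Proof. induction l; simpl; intros H; auto. rewrite H, IHl; auto. Qed.

(* [good Q] meets column [e] in its longest initial segment on which [Q e] holds. *)
Definition good (Q : nat -> nat -> Prop) (x : nat) : Prop :=
  forall e k, x = col e k -> forall j, j <= k -> Q e j.

Section GoodDensity.
Variables (Q : nat -> nat -> Prop) (X : natset).
Hypothesis HX : forall x, X x = true <-> good Q x.

(* [Y] omits the columns [e < N] on which [X] is finite: beyond finitely many points [X]
   is contained in [Y], and [Y] exceeds [X] only on the columns [e >= N]. *)
Lemma good_sandwich N : exists (Y : natset) K,
  (forall x, Y (x + 2 ^ (N + 1)) = Y x) /\
  (forall x, K <= x -> X x = true -> Y x = true) /\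
  (forall x, Y x = true -> X x = true \/ deep N x = true).
Proof.
  set (bad e := if excluded_middle_informative (exists j, ~ Q e j) then true else false).
  destruct (bounded_choice (fun e K => bad e = true -> exists j, ~ Q e j /\ col e j <= K) N)
    as [K HK].
  { intros e M M' HM H Hb. destruct (H Hb) as [j [Hj Hjk]]. exists j; split; auto; lia. }
  { intros e _. unfold bad. destruct (excluded_middle_informative _) as [[j Hj]|].
    - exists (col e j). intros _. exists j; auto.
    - exists 0. discriminate. }
  exists (fun x => negb (existsb (fun e => bad e && in_col e x) (seq 0 N))), K.
  repeat split.
  - intros x. f_equal. apply existsb_ext_in. intros e He%in_seq. f_equal.
    replace (N + 1) with ((N - 1 - e) + (e + 2)) by lia.
    rewrite Nat.pow_add_r. apply in_col_periodic.
  - intros x Hx HXx. apply negb_true_iff, not_true_iff_false.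
    intros [e [He%in_seq [Hb [k Hk]%in_col_spec]%andb_true_iff]]%existsb_exists.
    destruct (HK e ltac:(lia) Hb) as [j [Hj HjK]].
    apply Hj, (proj1 (HX x) HXx e k Hk). apply (col_le e). lia.
  - intros x Hx. destruct (X x) eqn:E; [left; auto | right].
    assert (Hng : ~ good Q x) by (rewrite <- HX; congruence).
    unfold good in Hng.
    apply not_all_ex_not in Hng as [e Hng]. apply not_all_ex_not in Hng as [k Hng].
    apply imply_to_and in Hng as [Hk Hng]. apply not_all_ex_not in Hng as [j Hng].
    apply imply_to_and in Hng as [Hj Hng].
    destruct (le_lt_dec N e) as [HNe|HNe]; [rewrite Hk; apply deep_col; auto|].
    exfalso. apply negb_true_iff, not_true_iff_false in Hx. apply Hx, existsb_exists.
    exists e. split; [apply in_seq; lia|]. apply andb_true_iff. split.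
    + unfold bad. destruct (excluded_middle_informative _) as [|Hn]; auto.
      exfalso; apply Hn; exists j; auto.
    + apply in_col_spec; eauto.
Qed.

Lemma good_approx N : exists c C, approx_density X (2 ^ (N + 1)) c C.
Proof.
  destruct (good_sandwich N) as [Y [K [HYper [HXY HYX]]]].
  set (P := 2 ^ (N + 1)) in *. assert (HP : 0 < P) by apply pow2_gt0.
  exists (count_below Y P), (2 * P * P + K * P). intros n.
  pose proof (count_cover X Y (fun _ => false) K (fun x Hx HXx => or_introl (HXY x Hx HXx)) n)
    as C1.
  pose proof (count_cover Y X (deep N) 0 (fun x _ => HYX x) n) as C2.
  rewrite count_false in C1.
  pose proof (periodic_count_bound Y P HP HYper n) as PY.
  pose proof (periodic_count_bound (deep N) P HP (deep_periodic N) n) as PD.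
  pose proof (deep_count N) as DC. fold P in DC.
  set (a := count_below X n) in *. set (b := count_below Y n) in *.
  set (d := count_below (deep N) n) in *.
  set (c := count_below Y P) in *. set (cd := count_below (deep N) P) in *.
  clearbody a b d c cd P. nia.
Qed.

Theorem good_has_density : has_density X.
Proof.
  apply has_density_of_approx. intros N. destruct (good_approx N) as [c [C H]].
  exists (2 ^ (N + 1)), c, C. split; auto. pose proof (pow2_gt (N + 1)). lia.
Qed.

End GoodDensity.

(* [col e j] escapes the [Pi^0_1] set coded by [e]: some [m] makes the program coded by
   [e] output [0] on [[col e j; m]]. *)
Definition escapes (e j : nat) : Prop :=
  exists m t, valid_trace t <> 0 /\
    occurs t (llen t) (entry e (lcons (col e j) (lcons m 0)) 0) <> 0.

Lemma escapes_godel p j : escapes (godel p) j <-> exists m, pr_eval p [col (godel p) j; m] = 0.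
Proof.
  split.
  - intros [m Hm]. exists m. apply pr_eval_iff_trace, Hm.
  - intros [m Hm]. exists m. apply (pr_eval_iff_trace p [col (godel p) j; m] 0), Hm.
Qed.

Definition diagonal_set : natset :=
  fun x => if excluded_middle_informative (good escapes x) then true else false.

Lemma diagonal_set_spec x : diagonal_set x = true <-> good escapes x.
Proof.
  unfold diagonal_set. destruct (excluded_middle_informative _); split; auto; discriminate.
Qed.

Definition bounded_escape e j M : Prop :=
  exists m t, m <= M /\ t <= M /\
    valid_trace t <> 0 /\ occurs t (llen t) (entry e (lcons (col e j) (lcons m 0)) 0) <> 0.

Definition good_matrix x M :=
  balln (S x) (fun e => balln (S x) (fun k => balln (S k) (fun j =>
    orn (notn (eqn x (col e k)))
        (bexn (S M) (fun m => bexn (S M) (fun t =>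
           andn (valid_trace t) (occurs t (llen t) (entry e (lcons (col e j) (lcons m 0)) 0)))))))).

Lemma pr_repr_col : pr_repr 2 (fun e => col (nth 0 e 0) (nth 1 e 0)).
Proof. unfold col; pr_auto. Qed.
#[export] Hint Resolve pr_repr_col : prdb.
Lemma pr_repr_good_matrix : pr_repr 2 (fun e => good_matrix (nth 0 e 0) (nth 1 e 0)).
Proof. unfold good_matrix; pr_auto. Qed.

Lemma good_matrix_spec x M : good_matrix x M <> 0 <->
  forall e k j, e <= x -> k <= x -> x = col e k -> j <= k -> bounded_escape e j M.
Proof.
  unfold good_matrix. split.
  - intros H e k j He Hk Hx Hj.
    rewrite balln_nz in H. specialize (H e ltac:(lia)).
    rewrite balln_nz in H. specialize (H k ltac:(lia)).
    rewrite balln_nz in H. specialize (H j ltac:(lia)).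
    rewrite orn_nz, notn_nz, eqn_z, bexn_nz in H.
    destruct H as [H | [m [Hm Hw]]]; [contradiction|].
    apply bexn_nz in Hw as [t [Ht Hw]]. apply andn_nz in Hw.
    exists m, t. repeat split; try tauto; lia.
  - intros H. apply balln_nz; intros e He. apply balln_nz; intros k Hk.
    apply balln_nz; intros j Hj. apply orn_nz.
    destruct (Nat.eq_dec x (col e k)) as [Hx|Hx]; [right | left; rewrite notn_nz, eqn_z; auto].
    destruct (H e k j ltac:(lia) ltac:(lia) Hx ltac:(lia)) as [m [t [Hm [Ht [Hv Ho]]]]].
    apply bexn_nz. exists m. split; [lia|]. apply bexn_nz. exists t. split; [lia|].
    apply andn_nz; auto.
Qed.

Lemma bounded_escape_mono e j M M' : M <= M' -> bounded_escape e j M -> bounded_escape e j M'.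
Proof. intros HM [m [t [Hm [Ht H]]]]. exists m, t. repeat split; auto; lia. Qed.

Lemma good_iff_matrix x : good escapes x <-> exists M, good_matrix x M <> 0.
Proof.
  split.
  - intros Hg.
    destruct (bounded_choice (fun e M => forall j, j < S x ->
                (exists k, x = col e k /\ j <= k) -> bounded_escape e j M) (S x)) as [M HM].
    { intros e M M' HMM' H j Hj Hk. apply (bounded_escape_mono _ _ M); auto. }
    { intros e _. apply (bounded_choice (fun j M => (exists k, x = col e k /\ j <= k) ->
                           bounded_escape e j M)).
      - intros j M M' HMM' H Hk. apply (bounded_escape_mono _ _ M); auto.
      - intros j _. destruct (classic (exists k, x = col e k /\ j <= k)) as [[k [Hx Hj]]|Hn].
        + destruct (Hg e k Hx j Hj) as [m [t Hw]]. exists (max m t). intros _.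
          exists m, t. repeat split; try tauto; lia.
        + exists 0. intros Hk. contradiction. }
    exists M. apply good_matrix_spec. intros e k j He Hk Hx Hj. apply (HM e); [lia | lia | eauto].
  - intros [M HM] e k Hx j Hj. rewrite good_matrix_spec in HM.
    destruct (col_ge e k) as [He Hk].
    destruct (HM e k j ltac:(lia) ltac:(lia) Hx Hj) as [m [t [_ [_ Hw]]]]. exists m, t. exact Hw.
Qed.

Lemma diagonal_set_ce : ce diagonal_set.
Proof.
  destruct pr_repr_good_matrix as [p Hp]. exists p. intros n.
  rewrite diagonal_set_spec, good_iff_matrix. split; intros [M HM]; exists M.
  - rewrite Hp; auto.
  - rewrite Hp in HM; auto.
Qed.

(* The least point of [B] in column [godel p] could not lie in [diagonal_set]. *)
Lemma pi01_misses_column B : Pi01 B -> subset B diagonal_set ->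
  exists e, forall k, diagonal_set (col e k) = true /\ B (col e k) = false.
Proof.
  intros [p Hp] Hsub. exists (godel p).
  assert (Hesc : forall j, escapes (godel p) j).
  { intros j. apply NNPP. intros Hn.
    assert (HB : B (col (godel p) j) = true).
    { apply Hp. intros m Hm. apply Hn, escapes_godel. eauto. }
    apply Hsub, diagonal_set_spec in HB. apply Hn, (HB _ j eq_refl j). lia. }
  intros k. split.
  - apply diagonal_set_spec. intros e' k' Hk j Hj.
    apply col_inj in Hk as [<- _]. apply Hesc.
  - destruct (B (col (godel p) k)) eqn:E; auto. exfalso.
    destruct (proj1 (escapes_godel p k) (Hesc k)) as [m Hm].
    exact (proj1 (Hp _) E m Hm).
Qed.

Theorem mainTheorem10 :
  exists A : natset,
    ce A /\ has_density A /\
    (forall B : natset, Pi01 B -> subset B A ->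
       Rbar_lt (Finite 0) (lower_density (setminus A B)) /\
       Rbar_lt (Finite 0) (dens_dist A B)).
Proof.
  exists diagonal_set. split; [apply diagonal_set_ce|]. split.
  { apply (good_has_density escapes). apply diagonal_set_spec. }
  intros B HB Hsub. destruct (pi01_misses_column B HB Hsub) as [e He].
  split; apply (lower_density_pos_col e); intros k; destruct (He k) as [HA HBk];
    unfold setminus, symdiff; rewrite HA, HBk; reflexivity.
Qed.
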